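(* Let $w=t_x\overline w\in\widehat W$ with $x\in L$, $\overline w\in W_0$. Then $\mathcal{L}_{\Lambda_0}(w)=\frac h2|x|^2-\mathrm{ht}(x)$; in particular $\mathcal{L}_{\Lambda_0}(w)=\mathcal{L}_{\Lambda_0}(t_x)$. Moreover, writing $w=\sigma_jv$ with $\sigma_j\in\Sigma$ and $v\in W$, one has $\mathcal{L}_{\Lambda_0}(\sigma_jv)=\mathcal{L}_{\Lambda_0}(\sigma_jv^0)$, where $v^0$ is the unique element of minimal length in $vW_0$.
   Context: Affine Kac–Moody setting: generalized Cartan matrix $A=(a_{ij})_{0\le i,j\le n}$ of affine type, realization $\Delta=\{\alpha_0,\dots,\alpha_n\}\subset\mathfrak h^*$, $\Delta^\vee\subset\mathfrak h$; $(a_i)$, $(a_i^\vee)$ primitive kernel vectors of $A$, $A^T$; $h=\sum a_i$, $\delta=\sum a_i\alpha_i$, $c=\sum a_i^\vee\alpha_i^\vee$, $\theta=\delta-a_0\alpha_0=\sum_{i\ge1}a_i\alpha_i$. $V_0=\bigoplus_{i\ge1}\mathbb{R}\alpha_i$ with the standard invariant form $(\cdot|\cdot)$. For $x\in V_0$, $t_x(v)=v+\langle v,c\rangle x-((v|x)+\frac12|x|^2\langle v,c\rangle)\delta$. $W_0=\langle s_1,\dots,s_n\rangle$, $M=\mathbb{Z}W_0(\theta/a_0)$, $W=\langle s_0,\dots,s_n\rangle=T(M)\rtimes W_0$. $L\subset V_0$ is the image of the coweight lattice $P_0^\vee=\bigoplus\mathbb{Z}\omega_i^\vee$ of $W_0$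 under the isomorphism $V_0^*\cong V_0$ induced by $(\cdot|\cdot)$; $M\subset L$; the extended affine Weyl group is $\widehat W=T(L)\rtimes W_0$. With $J=\{j\in\{1,\dots,n\}\mid a_j=1\}$, $\sigma_j=t_{\omega_j^\vee}w_{0,j}w_0$ for $j\in J$ ($w_0$ longest element of $W_0$, $w_{0,j}$ longest element of the parabolic subgroup generated by $s_i$, $i\ne j$, $1\le i\le n$), $\Sigma=\{e\}\cup\{\sigma_j\mid j\in J\}$, and every element of $\widehat W$ is uniquely $\sigma v$ with $\sigma\in\Sigma$, $v\in W$. $\rho^\vee\in\mathfrak h$ with $\langle\alpha_i,\rho^\vee\rangle=1$ for all $i$; $\mathcal{L}_{\Lambda_0}(g)=\langle\Lambda_0-g\Lambda_0,\rho^\vee\rangle$ for $g\in GL(\mathfrak h^* )$; $\mathrm{ht}(\sum x_i\alpha_i)=\sum x_i$ (rational coefficients allowed). *)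

From mathcomp Require Import all_boot all_order all_algebra.
Set Implicit Arguments.
Unset Strict Implicit.
Unset Printing Implicit Defensive.
Import Order.TTheory GRing.Theory Num.Theory.
Local Open Scope ring_scope.

(* Indices 0..n are the elements of 'I_n.+1.                           *)

Definition is_GCM (n : nat) (A : 'M[int]_n.+1) : Prop :=
  (forall i, A i i = 2) /\
  (forall i j, i != j -> A i j <= 0) /\
  (forall i j, A i j = 0 <-> A j i = 0).

Definition indecomposable (n : nat) (A : 'M[int]_n.+1) : Prop :=
  forall S : {set 'I_n.+1}, S != set0 -> S != setT ->
    exists i j, [/\ i \in S, j \notin S & A i j != 0].

Definition affine_GCM (R : realFieldType) (n : nat) (A : 'M[int]_n.+1) : Prop :=
  let AR := map_mx (fun z : int => z%:~R : R) A in
  [/\ is_GCM A, indecomposable A,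
      \rank AR = n,
      (exists u : 'cV[R]_n.+1, (forall i, 0 < u i 0) /\ AR *m u = 0)
    & (forall v : 'cV[R]_n.+1, (forall i, 0 <= (AR *m v) i 0) -> AR *m v = 0)].

Definition primitive_kernel_vector (n : nat) (A : 'M[int]_n.+1)
    (a : 'I_n.+1 -> nat) : Prop :=
  [/\ forall i, (0 < a i)%N,
      forall i, \sum_j A i j * (a j)%:Z = 0
    & \big[gcdn/0%N]_i a i = 1%N].

Section Realization.
Variable R : realFieldType.
Variable n : nat.
Variable A : 'M[int]_n.+1.
Variables a av : 'I_n.+1 -> nat.

(* h^* has basis alpha_0..alpha_n, Lambda_0; h has basis alpha_0^v..alpha_n^v, d.
   Coordinates: index (lift ord_max i) (whose value is i) for alpha_i resp.
   alpha_i^v, index ord_max for Lambda_0 resp. d. *)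
Definition aidx (i : 'I_n.+1) : 'I_n.+2 := lift ord_max i.

(* pairing matrix: P k l = < k-th basis vector of h^*, l-th basis vector of h >
   <alpha_j, alpha_i^v> = a_ij, <alpha_j, d> = delta_{j0},
   <Lambda_0, alpha_i^v> = delta_{i0}, <Lambda_0, d> = 0. *)
Definition pairmx : 'M[R]_n.+2 :=
  \matrix_(k, l)
    match unlift ord_max k, unlift ord_max l with
    | Some j, Some i => (A i j)%:~R
    | Some j, None => (j == ord0)%:R
    | None, Some i => (i == ord0)%:R
    | None, None => 0
    end.

Definition kpair (lam : 'cV[R]_n.+2) (mu : 'cV[R]_n.+2) : R :=
  (lam^T *m pairmx *m mu) 0 0.

Definition alpha (i : 'I_n.+1) : 'cV[R]_n.+2 := delta_mx (aidx i) 0.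
Definition coroot (i : 'I_n.+1) : 'cV[R]_n.+2 := delta_mx (aidx i) 0.
Definition Lambda0 : 'cV[R]_n.+2 := delta_mx ord_max 0.

(* simple reflection s_i(lam) = lam - <lam, alpha_i^v> alpha_i *)
Definition srefl (i : 'I_n.+1) : 'M[R]_n.+2 :=
  1%:M - alpha i *m (pairmx *m coroot i)^T.

Definition deltav : 'cV[R]_n.+2 := \sum_i (a i)%:R *: alpha i.
Definition cvec : 'cV[R]_n.+2 := \sum_i (av i)%:R *: coroot i.

(* Kac's normalized invariant invform on h^*:
   (alpha_i|alpha_j) = a_i^v a_i^-1 a_ij, (alpha_i|Lambda_0) = delta_{i0} a_0^v a_0^-1,
   (Lambda_0|Lambda_0) = 0. *)
Definition gram : 'M[R]_n.+2 :=
  \matrix_(k, l)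
    match unlift ord_max k, unlift ord_max l with
    | Some i, Some j => (av i)%:R / (a i)%:R * (A i j)%:~R
    | Some i, None => (i == ord0)%:R * (av ord0)%:R / (a ord0)%:R
    | None, Some j => (j == ord0)%:R * (av ord0)%:R / (a ord0)%:R
    | None, None => 0
    end.

Definition invform (x y : 'cV[R]_n.+2) : R := (x^T *m gram *m y) 0 0.

(* V_0 = span(alpha_1, ..., alpha_n) *)
Definition inV0 (x : 'cV[R]_n.+2) : Prop :=
  x ord_max 0 = 0 /\ x (aidx ord0) 0 = 0.

(* L = image of the coweight lattice of W_0 in V_0 under V_0^* ~ V_0:
   x in V_0 with (x|alpha_j) in Z for j = 1..n *)
Definition inL (x : 'cV[R]_n.+2) : Prop :=
  inV0 x /\ forall j : 'I_n.+1, j != ord0 -> exists m : int, invform x (alpha j) = m%:~R.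

(* omega is the (image of the) fundamental coweight omega_j^v *)
Definition coweight (j : 'I_n.+1) (omega : 'cV[R]_n.+2) : Prop :=
  inV0 omega /\ forall k : 'I_n.+1, k != ord0 -> invform omega (alpha k) = (k == j)%:R.

Definition ht (x : 'cV[R]_n.+2) : R := \sum_i x (aidx i) 0.

(* t_x(v) = v + <v,c> x - ((v|x) + 1/2 |x|^2 <v,c>) deltav *)
Definition tmx (x : 'cV[R]_n.+2) : 'M[R]_n.+2 :=
  1%:M + x *m (pairmx *m cvec)^T
  - deltav *m ((gram *m x)^T + (invform x x / 2%:R) *: (pairmx *m cvec)^T).

Definition wordmx (s : seq 'I_n.+1) : 'M[R]_n.+2 := \prod_(i <- s) srefl i.

Definition inWP (P : pred 'I_n.+1) (g : 'M[R]_n.+2) : Prop :=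
  exists s, all P s /\ g = wordmx s.

Definition W0pred : pred 'I_n.+1 := fun i => i != ord0.
Definition W0jpred (j : 'I_n.+1) : pred 'I_n.+1 := fun i => (i != ord0) && (i != j).

Definition inW (g : 'M[R]_n.+2) : Prop := inWP predT g.
Definition inW0 (g : 'M[R]_n.+2) : Prop := inWP W0pred g.

Definition lenP (P : pred 'I_n.+1) (g : 'M[R]_n.+2) (k : nat) : Prop :=
  (exists s, [/\ all P s, g = wordmx s & size s = k]) /\
  (forall s, all P s -> g = wordmx s -> (k <= size s)%N).

Definition longestP (P : pred 'I_n.+1) (g : 'M[R]_n.+2) : Prop :=
  inWP P g /\ exists k, lenP P g k /\ forall u k', lenP P u k' -> (k' <= k)%N.

Definition inSigma (g : 'M[R]_n.+2) : Prop :=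
  g = 1%:M \/
  exists (j : 'I_n.+1) omega w0 w0j,
    [/\ j != ord0, a j = 1%N, coweight j omega,
        longestP W0pred w0 & longestP (W0jpred j) w0j] /\
    g = tmx omega * w0j * w0.

Definition min_in_coset (v v0 : 'M[R]_n.+2) : Prop :=
  (exists u, inW0 u /\ v0 = v * u) /\
  exists s, v0 = wordmx s /\
    forall u s', inW0 u -> v * u = wordmx s' -> (size s <= size s')%N.

Definition LL (rho : 'cV[R]_n.+2) (g : 'M[R]_n.+2) : R :=
  kpair (Lambda0 - g *m Lambda0) rho.

Definition hcox : nat := \sum_i a i.

End Realization.

From mathcomp Require Import all_boot all_order all_algebra.
From mathcomp Require Import ring.
Set Implicit Arguments.
Unset Strict Implicit.
Unset Printing Implicit Defensive.
Import Order.TTheory GRing.Theory Num.Theory.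
Local Open Scope ring_scope.

(** Both statements come down to the orbit of [Lambda0].  Each [s_i] with
    [i <> 0] fixes [Lambda0], because [<Lambda0, alpha_i^v> = 0]; so the whole
    of [W_0] fixes it and [L_Lambda0(g u) = L_Lambda0(g)] for [u] in [W_0].
    This gives [L(t_x wb) = L(t_x)] and [L(sigma v) = L(sigma v^0)], since
    [v^0 = v u] with [u] in [W_0].  Finally, for [x] in [V_0] one has
    [(Lambda0 | x) = 0], hence
    [t_x(Lambda0) = Lambda0 + a_0^v x - a_0^v |x|^2/2 delta], and pairing with
    [rho^v], which counts heights, gives
    [L(t_x) = a_0^v (h |x|^2/2 - ht x)]. *)

Lemma mulmx_delta_col (R : pzSemiRingType) (p m : nat) (B : 'M[R]_(p, m))
    (k : 'I_m) (j : 'I_p) (q : 'I_1) :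
  (B *m delta_mx k 0) j q = B j k.
Proof. by rewrite -colE mxE. Qed.

Section Lambda0Stabilizer.
Variables (R : realFieldType) (n : nat) (A : 'M[int]_n.+1).

Lemma pairmx_Lambda0_coroot (i : 'I_n.+1) :
  pairmx R A ord_max (aidx i) = (i == ord0)%:R.
Proof. by rewrite mxE unlift_none /aidx liftK. Qed.

Lemma srefl_Lambda0 (i : 'I_n.+1) :
  i != ord0 -> srefl R A i *m Lambda0 R n = Lambda0 R n.
Proof.
move=> i_neq0; rewrite /srefl mulmxBl mul1mx -mulmxA.
suff -> : (pairmx R A *m coroot R i)^T *m Lambda0 R n = 0
  by rewrite mulmx0 subr0.
apply/matrixP => p q; rewrite [p]ord1 [q]ord1 mulmx_delta_col [RHS]mxE mxE.
by rewrite mulmx_delta_col pairmx_Lambda0_coroot (negbTE i_neq0).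
Qed.

Lemma inW0_Lambda0 (u : 'M[R]_n.+2) : inW0 A u -> u *m Lambda0 R n = Lambda0 R n.
Proof.
case=> s [+ ->]; elim: s => [|i s IHs] /=; first by rewrite /wordmx big_nil mul1mx.
case/andP=> i_neq0 s_W0.
by rewrite /wordmx big_cons -/(wordmx R A s) -mulmxA IHs // srefl_Lambda0.
Qed.

Lemma LL_mulr_fixed (rho : 'cV[R]_n.+2) (g u : 'M[R]_n.+2) :
  u *m Lambda0 R n = Lambda0 R n -> LL A rho (g * u) = LL A rho g.
Proof. by move=> uL; rewrite /LL -mulmxE -mulmxA uL. Qed.

End Lambda0Stabilizer.

Section Heights.
Variables (R : realFieldType) (n : nat) (A : 'M[int]_n.+1) (a : 'I_n.+1 -> nat).

Lemma htB (u v : 'cV[R]_n.+2) : ht (u - v) = ht u - ht v.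
Proof. by rewrite /ht -sumrB; apply: eq_bigr => i _; rewrite !mxE. Qed.

Lemma htZ (c : R) (u : 'cV[R]_n.+2) : ht (c *: u) = c * ht u.
Proof. by rewrite /ht mulr_sumr; apply: eq_bigr => i _; rewrite mxE. Qed.

Lemma deltav_aidx (i : 'I_n.+1) : deltav R a (aidx i) 0 = (a i)%:R.
Proof.
rewrite /deltav summxE (bigD1 i) //= big1 ?addr0.
  by rewrite mxE /alpha mxE !eqxx mulr1.
move=> j j_neq_i; rewrite mxE /alpha mxE (inj_eq (@lift_inj _ _)).
by rewrite eq_sym (negbTE j_neq_i) andbT mulr0.
Qed.

Lemma deltav_max : deltav R a ord_max 0 = 0.
Proof.
rewrite /deltav summxE big1 // => j _.
by rewrite mxE /alpha mxE /aidx (negbTE (neq_lift _ _)) mulr0.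
Qed.

Lemma ht_deltav : ht (deltav R a) = (hcox a)%:R.
Proof. by rewrite /ht /hcox natr_sum; apply: eq_bigr => i _; rewrite deltav_aidx. Qed.

Lemma kpair_alpha (rho : 'cV[R]_n.+2) (i : 'I_n.+1) :
  kpair A (alpha R i) rho = (pairmx R A *m rho) (aidx i) 0.
Proof. by rewrite /kpair -mulmxA /alpha trmx_delta -rowE mxE. Qed.

(* [rho^v] is only pinned down up to [<Lambda0, rho^v>]; vectors without a
   [Lambda0]-component do not see that ambiguity. *)
Lemma kpair_rho_ht (rho lam : 'cV[R]_n.+2) :
  (forall i, kpair A (alpha R i) rho = 1) -> lam ord_max 0 = 0 ->
  kpair A lam rho = ht lam.
Proof.
move=> rhoE lam_max.
have rho_aidx i : (pairmx R A *m rho) (aidx i) 0 = 1 by rewrite -kpair_alpha.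
rewrite /kpair -mulmxA; set r := pairmx R A *m rho in rho_aidx *.
rewrite mxE (bigD1_ord ord_max) //= mxE lam_max mul0r add0r.
by apply: eq_bigr => i _; rewrite mxE rho_aidx mulr1.
Qed.

End Heights.

Section Translations.
Variables (R : realFieldType) (n : nat) (A : 'M[int]_n.+1) (a av : 'I_n.+1 -> nat).

Lemma pairmx_cvec_max : (pairmx R A *m cvec R av) ord_max 0 = (av ord0)%:R.
Proof.
rewrite /cvec mulmx_sumr summxE (bigD1 ord0) //= big1 ?addr0.
  by rewrite -scalemxAr mxE mulmx_delta_col pairmx_Lambda0_coroot eqxx mulr1.
move=> j j_neq0; rewrite -scalemxAr mxE mulmx_delta_col.
by rewrite pairmx_Lambda0_coroot (negbTE j_neq0) mulr0.
Qed.

Lemma gram_V0_max (x : 'cV[R]_n.+2) :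
  inV0 x -> (gram R A a av *m x) ord_max 0 = 0.
Proof.
case=> x_max x_0; rewrite mxE (bigD1_ord ord_max) //= x_max mulr0 add0r.
rewrite big1 // => i _; rewrite mxE unlift_none liftK.
by case: eqP => [->|_]; rewrite ?x_0 ?mulr0 // !mul0r.
Qed.

Lemma tmx_Lambda0 (x : 'cV[R]_n.+2) : inV0 x ->
  tmx A a av x *m Lambda0 R n
    = Lambda0 R n + (av ord0)%:R *: x
      - ((av ord0)%:R * invform A a av x x / 2%:R) *: deltav R a.
Proof.
move=> x_V0; apply/matrixP => k q; rewrite [q]ord1 mulmx_delta_col.
have cE := pairmx_cvec_max; have gE := gram_V0_max x_V0.
rewrite /tmx; set c := pairmx R A *m _ in cE *; set g := gram R A a av *m x in gE *.
clearbody c g; rewrite !mxE !big_ord1 !mxE.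
have -> : (ord0 : 'I_1) = 0 by [].
rewrite cE gE eqxx andbT add0r; ring.
Qed.

Lemma LL_tmx (rho x : 'cV[R]_n.+2) :
  (forall i, kpair A (alpha R i) rho = 1) -> inV0 x ->
  LL A rho (tmx A a av x)
    = (av ord0)%:R * ((hcox a)%:R / 2%:R * invform A a av x x - ht x).
Proof.
move=> rhoE x_V0; rewrite /LL tmx_Lambda0 // opprB addrCA opprD addNKr.
rewrite kpair_rho_ht //; last by rewrite !mxE deltav_max (proj1 x_V0); ring.
by rewrite htB !htZ ht_deltav; ring.
Qed.

End Translations.

Theorem proposition2p6 (R : realFieldType) (n : nat) (A : 'M[int]_n.+1)
    (a av : 'I_n.+1 -> nat)
    (hA : affine_GCM R A)
    (ha : primitive_kernel_vector A a)
    (hav : primitive_kernel_vector A^T av)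
    (hav0 : av ord0 = 1%N)
    (rho : 'cV[R]_n.+2)
    (hrho : forall i : 'I_n.+1, kpair A (alpha R i) rho = 1) :
  (forall (x : 'cV[R]_n.+2) (wb : 'M[R]_n.+2),
      inL A a av x -> inW0 A wb ->
      LL A rho (tmx A a av x * wb)
        = (hcox a)%:R / 2%:R * invform A a av x x - ht x
      /\ LL A rho (tmx A a av x * wb) = LL A rho (tmx A a av x)) /\
  (forall (sigma v v0 : 'M[R]_n.+2),
      inSigma A a av sigma -> inW A v -> min_in_coset A v v0 ->
      LL A rho (sigma * v) = LL A rho (sigma * v0)).
Proof.
split.
  move=> x wb [x_V0 _] wb_W0.
  rewrite LL_mulr_fixed ?(inW0_Lambda0 wb_W0) //.
  by rewrite LL_tmx // hav0 mul1r.
move=> sigma v _ _ _ [[u [u_W0 ->]] _].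
by rewrite mulrA [RHS]LL_mulr_fixed ?(inW0_Lambda0 u_W0).
Qed.
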